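(* For every integer $k\ge 2$, the complete multipartite graph $K_{1,2*(k-1),k-1}$ (with one part of size $1$, $k-1$ parts of size $2$, and one further part of size $k-1$) has m-number $k+1$.
   Context: All graphs are finite, simple and undirected. A list assignment $L$ for a graph $G$ assigns to each vertex $v$ a set $L(v)$ of colors; an $L$-coloring is a proper vertex coloring $c$ of $G$ with $c(v)\in L(v)$ for every vertex $v$. A $k$-list assignment is a list assignment with $|L(v)|=k$ for all $v$. $G$ is uniquely $k$-list colorable (U$k$LC) if there exists a $k$-list assignment $L$ such that $G$ has exactly one $L$-coloring. $G$ has property $M(k)$ if it is not U$k$LC, i.e. for every $k$-list assignment $L$, $G$ has either no $L$-coloring or at least two $L$-colorings. The m-number $m(G)$ is the least integer $k\ge 1$ such that $G$ has property $M(k)$. (Every U$k$LC graph is also U$(k-1)$LC, so $G$ is U$k$LC iff $k<m(G)$.) *)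

From mathcomp Require Import all_boot.
Set Implicit Arguments. Unset Strict Implicit. Unset Printing Implicit Defensive.

(* Part sizes s = [:: s_0; s_1; ...]; vertex set 'I_(sumn s); vertices
   0 .. s_0-1 form part 0, the next s_1 vertices part 1, etc. *)
Definition part_bounds (s : seq nat) : seq nat :=
  [seq sumn (take j.+1 s) | j <- iota 0 (size s)].

Definition part_of (s : seq nat) (i : nat) : nat :=
  count (fun m => m <= i) (part_bounds s).

Definition cm_adj (s : seq nat) : rel 'I_(sumn s) :=
  fun u v => part_of s u != part_of s v.

Arguments cm_adj s u v : clear implicits.

Definition K_sizes (k : nat) : seq nat := 1 :: nseq (k - 1) 2 ++ [:: k - 1].

(* Colours are natural numbers (any finite lists can be relabelled). *)
Definition k_list_assignment (T : finType) (k : nat) (L : T -> seq nat) :=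
  forall v, uniq (L v) /\ size (L v) = k.

Definition L_coloring (T : finType) (adj : rel T) (L : T -> seq nat)
    (c : T -> nat) :=
  (forall v, c v \in L v) /\ (forall u v, adj u v -> c u != c v).

Definition UkLC (T : finType) (adj : rel T) (k : nat) :=
  exists L, k_list_assignment k L /\
    exists c, L_coloring adj L c /\
      forall c', L_coloring adj L c' -> c' =1 c.

Definition property_M (T : finType) (adj : rel T) (k : nat) := ~ UkLC adj k.

Definition m_number_is (T : finType) (adj : rel T) (m : nat) :=
  1 <= m /\ property_M adj m /\
  forall j, 1 <= j -> j < m -> ~ property_M adj j.

From mathcomp Require Import all_boot zify.
Set Implicit Arguments. Unset Strict Implicit. Unset Printing Implicit Defensive.

(* Give the k pairwise adjacent vertices 0, 1, 3, ..., 2k-3 (one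
   in each of the parts 0, ..., k-1) the list [0, k); any colouring uses all of
   [0, k) on them, and the remaining lists are chosen so that this forces the
   colour of every other vertex.

   In a uniquely L-coloured complete multipartite graph call y an
   out-colour of the colour x if y <> x lies in the list of every vertex coloured
   x.  Rotating colour classes along out-colours would give a second colouring,
   so if at most t colours have at most t out-colours, then all colours do.  With
   (k+1)-lists a colour used once has k out-colours and a colour used twice has
   about 2k minus the number of colours its vertices can see; counting the
   colours used once, twice and three times on the pairs and on the part of
   size k-1 then yields contradictory bounds. *)

Lemma UkLC_pred (T : finType) (adj : rel T) k : 0 < k -> UkLC adj k.+1 -> UkLC adj k.
Proof.
move=> k_gt0 [L [L_size [c [[cL c_proper] c_uniq]]]].
pose L' v := take k (c v :: rem (c v) (L v)).
have subL v : {subset L' v <= L v}.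
  by move=> y /mem_take; rewrite inE => /predU1P[->|/mem_rem].
exists L'; split.
  move=> v; have [L_uniq L_sz] := L_size v; split.
    by rewrite take_uniq //= rem_uniq // andbT mem_rem_uniqF.
  by rewrite size_take /= size_rem ?cL // L_sz ltnSn.
exists c; split; last by move=> c' [c'L c'_proper]; apply: c_uniq; split=> // v; apply: subL.
by split=> // v; rewrite /L' -(prednK k_gt0) mem_head.
Qed.

Lemma UkLC_leq (T : finType) (adj : rel T) j k :
  0 < j -> j <= k -> UkLC adj k -> UkLC adj j.
Proof.
move=> j_gt0; elim: k => [|k IHk]; first by rewrite leqn0 => /eqP j0; rewrite j0 in j_gt0.
rewrite leq_eqVlt => /predU1P[-> //|lt_jk] /UkLC_pred-/(_ (leq_trans j_gt0 lt_jk)).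
exact: IHk.
Qed.

Lemma m_number_isS (T : finType) (adj : rel T) k :
  0 < k -> UkLC adj k -> property_M adj k.+1 -> m_number_is adj k.+1.
Proof.
move=> k_gt0 Uk Mk1; split=> //; split=> // j j_gt0 lt_jk; apply.
exact: UkLC_leq Uk.
Qed.

Lemma closed_subset_injective (T : finType) (R : {set T}) (g : T -> T) :
  R != set0 -> {in R, forall x, g x \in R} ->
  exists A : {set T}, [/\ A != set0, A \subset R,
    {in A, forall x, g x \in A} & {in A &, injective g}].
Proof.
move=> R0 gR; pose closed (A : {set T}) := [&& A != set0, A \subset R & [forall x in A, g x \in A]].
have closedR : closed R by rewrite /closed R0 subxx; apply/forall_inP.
(* a g-closed nonempty subset of minimal size is mapped onto itself *)
case: (arg_minnP (fun A : {set T} => #|A|) closedR) => A /and3P[A0 AR /forall_inP gA] minA.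
exists A; split=> //; apply/imset_injP; rewrite eqn_leq leq_imset_card minA //.
have gAA : g @: A \subset A by apply/subsetP => _ /imsetP[x Ax ->]; apply: gA.
rewrite /closed (subset_trans gAA AR) /=; apply/andP; split.
  by have [x Ax] := set0Pn _ A0; apply/set0Pn; exists (g x); apply: imset_f.
by apply/forall_inP => y /(subsetP gAA) Ay; apply: imset_f.
Qed.

Lemma card_part_range (T : finType) (p : T -> nat) m d b :
    (forall j, m <= j < m + d -> #|[set v | p v == j]| <= b) ->
  #|[set v | m <= p v < m + d]| <= d * b.
Proof.
elim: d => [|d IHd] card_part.
  by rewrite leqn0 cards_eq0 -subset0; apply/subsetP => v; rewrite inE; lia.
have split_range : [set v | m <= p v < m + d.+1]
    \subset [set v | m <= p v < m + d] :|: [set v | p v == m + d].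
  by apply/subsetP => v; rewrite !inE; case: ltngtP; lia.
apply: leq_trans (subset_leq_card split_range) _.
apply: leq_trans (leq_card_setU _ _).1 _; rewrite mulSnr.
by apply: leq_add; [apply: IHd => j ? |]; apply: card_part; lia.
Qed.

Lemma card_ord_range n (A : {set 'I_n}) lo hi :
  (forall v : 'I_n, v \in A -> lo <= v < hi) -> #|A| <= hi - lo.
Proof.
move=> A_range; rewrite cardE -(size_map val) -(size_iota lo (hi - lo)).
apply: uniq_leq_size; first by rewrite map_inj_uniq ?enum_uniq //; apply: val_inj.
by move=> x /mapP[v]; rewrite mem_enum mem_iota => /A_range/andP[? ?] -> /=; apply/andP; split; lia.
Qed.

Section UniqueMultipartiteColoring.

Variables (V : finType) (p : V -> nat) (K : nat) (L : V -> seq nat) (c : V -> nat).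
Hypothesis L_size : k_list_assignment K L.
Hypothesis c_col : L_coloring (fun u v => p u != p v) L c.
Hypothesis c_unique : forall c', L_coloring (fun u v => p u != p v) L c' -> c' =1 c.

(* Colours are re-encoded in an ordinal type so that sets of colours are
   finite sets. *)
Definition color_bound := (\max_v \max_(y <- L v) y).+1.

Definition color v : 'I_color_bound := inord (c v).
Definition list_set v := [set y : 'I_color_bound | val y \in L v].
Definition colors := [set color v | v : V].
Definition color_class x := [set v | color v == x].
Definition out_colors x :=
  [set y | (y != x) && [forall v in color_class x, y \in list_set v]].
Definition low_colors t := [set x in colors | #|out_colors x| <= t].
Definition multi_colors n (S : {set 'I_color_bound}) :=
  [set x in S | n <= #|color_class x|].

Lemma list_lt_color_bound v y : y \in L v -> y < color_bound.
Proof. by move=> Ly; rewrite ltnS (leq_trans (leq_bigmax_seq _ Ly _) (leq_bigmax v)). Qed.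

Lemma val_color v : val (color v) = c v.
Proof. by apply: inordK; apply: (@list_lt_color_bound v); case: c_col. Qed.

Lemma color_val v y : c v = val y -> color v = y.
Proof. by move=> cv; apply: val_inj; rewrite val_color. Qed.

Lemma color_in_list v : color v \in list_set v.
Proof. by rewrite inE val_color; case: c_col. Qed.

Lemma card_list_set v : #|list_set v| = K.
Proof.
have [L_uniq <-] := L_size v; rewrite cardE -(size_map val).
apply/perm_size/uniq_perm => [|//|y]; first by rewrite map_inj_uniq ?enum_uniq //; apply: val_inj.
apply/mapP/idP => [[x] | Ly]; first by rewrite mem_enum inE => ? ->.
have lt_y := list_lt_color_bound Ly.
by exists (inord y); rewrite ?mem_enum ?inE /= inordK.
Qed.

Lemma color_part u v : color u = color v -> p u = p v.
Proof.
move=> uv; apply/eqP; apply: contraLR isT => /(proj2 c_col).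
by rewrite -!val_color uv eqxx.
Qed.

(* Recolouring v with y would give a second colouring unless y is the colour
   of a vertex in another part. *)
Lemma list_set_sub_colors v :
  list_set v :\ color v \subset color @: [set u | p u != p v].
Proof.
apply/subsetP => y; rewrite !inE => /andP[y_neq Ly].
case: (pickP [pred u | (p u != p v) && (color u == y)]) => [u /andP[uv /eqP <-] | none].
  by apply: imset_f; rewrite inE.
have [cL c_proper] := c_col.
pose c' w := if w == v then val y else c w.
have c'_col : L_coloring (fun u v => p u != p v) L c'.
  split=> [w | u w uw]; first by rewrite /c'; case: eqP => [-> //|_]; apply: cL.
  have free u' : p u' != p v -> c u' != val y.
    by move=> u'v; apply: contraFneq (none u') => /color_val cu; rewrite /= u'v cu eqxx.
  rewrite /c'; case: (eqVneq u v) uw => [-> | _]; case: (eqVneq w v) => [-> | _] uw.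
  - by rewrite eqxx in uw.
  - by rewrite eq_sym free // eq_sym.
  - exact: free.
  - exact: c_proper.
have := c_unique c'_col v; rewrite /c' eqxx => /esym/color_val cv.
by rewrite cv eqxx in y_neq.
Qed.

Lemma list_setD1_sub_colors v : list_set v :\ color v \subset colors :\ color v.
Proof.
apply/subsetP => y y_in; move: (y_in); rewrite !in_setD1 => /andP[-> _] /=.
by case/imsetP: (subsetP (list_set_sub_colors v) _ y_in) => u _ ->; apply: imset_f.
Qed.

Lemma out_colors_sub x : x \in colors -> out_colors x \subset colors.
Proof.
case/imsetP=> v _ ->; apply/subsetP => y; rewrite inE => /andP[y_neq /forall_inP/(_ v)].
rewrite inE eqxx => /(_ isT) Ly.
have : y \in list_set v :\ color v by rewrite in_setD1 y_neq Ly.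
by move/(subsetP (list_setD1_sub_colors v)); rewrite in_setD1 => /andP[].
Qed.

Lemma color_class_gt0 x : x \in colors -> 0 < #|color_class x|.
Proof. by case/imsetP=> v _ ->; apply/card_gt0P; exists v; rewrite inE. Qed.

(* Shifting every colour class x in A to the colour g x is a second colouring. *)
Lemma no_color_rotation (A : {set 'I_color_bound}) g :
  A != set0 -> A \subset colors -> {in A, forall x, g x \in A} ->
  {in A &, injective g} -> {in A, forall x, g x \in out_colors x} -> False.
Proof.
move=> A0 A_colors gA g_inj g_out; have [cL c_proper] := c_col.
pose c' w := if color w \in A then val (g (color w)) else c w.
have c'_col : L_coloring (fun u v => p u != p v) L c'.
  split=> [w | u w uw].
    rewrite /c'; case: ifP => [/g_out | _]; last exact: cL.
    by rewrite inE => /andP[_ /forall_inP/(_ w)]; rewrite !inE eqxx => /(_ isT).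
  have cuw : color u != color w by apply: contra uw => /eqP/color_part ->.
  rewrite /c'; case: ifP => Au; case: ifP => Aw.
  - by apply: contra cuw => /eqP/val_inj/g_inj ->.
  - by apply: contraFneq Aw => /esym/color_val ->; apply: gA.
  - by apply: contraFneq Au => /color_val ->; apply: gA.
  - exact: c_proper.
have [x Ax] := set0Pn _ A0; have /imsetP[v _ xv] := subsetP A_colors _ Ax.
have := c_unique c'_col v; rewrite /c' -xv Ax => /esym/color_val gx.
by move: (g_out _ Ax); rewrite inE -gx -xv eqxx.
Qed.

(* Every colour of R := colors :\: low_colors t has, by counting, an out-colour
   in R; following out-colours inside R gives a rotation. *)
Lemma card_out_low_colors t x :
  #|low_colors t| <= t -> x \in colors -> #|out_colors x| <= t.
Proof.
move=> low_t x_col; apply: contraTT isT => x_high.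
pose R := colors :\: low_colors t.
have escape z : z \in R -> exists y, y \in out_colors z :\: low_colors t.
  rewrite inE => /andP[+ z_col]; rewrite inE z_col /= -ltnNge => z_high.
  apply/set0Pn; apply: contraTneq z_high => out_low; rewrite -leqNgt.
  have : out_colors z \subset low_colors t by rewrite -setD_eq0 out_low.
  by move/subset_leq_card/leq_trans; apply.
pose g z := odflt z [pick y in out_colors z :\: low_colors t].
have g_out z : z \in R -> g z \in out_colors z :\: low_colors t.
  by move=> /escape[y y_out]; rewrite /g; case: pickP => [// | /(_ y)]; rewrite y_out.
have gR : {in R, forall z, g z \in R}.
  move=> z Rz; have := g_out z Rz; rewrite !in_setD => /andP[-> gz_out] /=.
  by apply: (subsetP (out_colors_sub _)) gz_out; move: Rz; rewrite in_setD => /andP[].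
have R0 : R != set0 by apply/set0Pn; exists x; rewrite inE x_col inE x_col /= andbT.
have [A [A0 AR gA g_inj]] := closed_subset_injective R0 gR.
have A_colors : A \subset colors by apply: subset_trans AR (subsetDl _ _).
have gA_out : {in A, forall z, g z \in out_colors z}.
  by move=> z /(subsetP AR)/g_out; rewrite in_setD => /andP[].
by case: (no_color_rotation A0 A_colors gA g_inj gA_out).
Qed.

Lemma card_list_setD1 v : #|list_set v :\ color v| = K.-1.
Proof. by rewrite -(card_list_set v) [in RHS](cardsD1 (color v)) color_in_list. Qed.

Lemma card_out_colors_class1 x v : color_class x = [set v] -> K.-1 <= #|out_colors x|.
Proof.
move=> class_x; have : v \in color_class x by rewrite class_x set11.
rewrite inE => /eqP vx; rewrite -(card_list_setD1 v) vx; apply/subset_leq_card/subsetP => y.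
rewrite !inE => /andP[-> Ly]; apply/forall_inP => w; rewrite class_x => /set1P ->.
by rewrite inE.
Qed.

Lemma card_out_colors_class2 x u w (U : {set 'I_color_bound}) :
    color_class x = [set u; w] ->
    list_set u :\ x \subset U -> list_set w :\ x \subset U ->
  (K.-1).*2 <= #|out_colors x| + #|U|.
Proof.
move=> class_x Uu Uw.
have color_x z : z \in [set u; w] -> color z = x by rewrite -class_x inE => /eqP.
have common : (list_set u :\ x) :&: (list_set w :\ x) \subset out_colors x.
  apply/subsetP => y; rewrite !inE => /andP[/andP[-> Ly] /andP[_ Ly']] /=.
  by apply/forall_inP => z; rewrite class_x !inE => /orP[] /eqP ->.
have := cardsUI (list_set u :\ x) (list_set w :\ x).
rewrite -(color_x u) ?set21 // card_list_setD1 (color_x u) ?set21 //.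
rewrite -(color_x w) ?set22 // card_list_setD1 (color_x w) ?set22 // addnn => <-.
by rewrite addnC; apply: leq_add; apply: subset_leq_card; rewrite // subUset Uu.
Qed.

Lemma card_multi_colors (U : {set V}) :
    {in U, forall v w, color w = color v -> w \in U} ->
  #|color @: U| + #|multi_colors 2 (color @: U)| + #|multi_colors 3 (color @: U)|
    <= #|U|.
Proof.
move=> U_closed; set S := color @: U.
have card_multi n : #|multi_colors n S| = \sum_(x in S) (n <= #|color_class x|).
  by rewrite -sum1dep_card big_mkcondr; apply: eq_bigr => x _; case: leqP.
have class_in_U x : x \in S -> \sum_(v in U | color v == x) 1 = #|color_class x|.
  case/imsetP=> v0 Uv0 ->; rewrite -sum1_card; apply: eq_bigl => v; rewrite inE.
  by case: eqP => [/U_closed-> // | _]; rewrite andbF.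
rewrite !card_multi -sum1_card -!big_split -[#|U|]sum1_card.
rewrite (partition_big_imset color) /=; apply: leq_sum => x Sx; rewrite class_in_U //.
have : 0 < #|color_class x|.
  by apply: color_class_gt0; case/imsetP: Sx => v _ ->; apply: imset_f.
by case: #|color_class x| => [|[|[|m]]].
Qed.

End UniqueMultipartiteColoring.

Section SmallMultipartite.

Variables (k : nat) (V : finType) (p : V -> nat) (a : V).
Variables (L : V -> seq nat) (c : V -> nat).
Hypothesis L_size : k_list_assignment k.+1 L.
Hypothesis c_col : L_coloring (fun u v => p u != p v) L c.
Hypothesis c_unique : forall c', L_coloring (fun u v => p u != p v) L c' -> c' =1 c.
Hypothesis part0 : forall v, (p v == 0) = (v == a).
Hypothesis part_le : forall v, p v <= k.
Hypothesis card_part_mid : forall j, 0 < j < k -> #|[set v | p v == j]| <= 2.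
Hypothesis card_part_last : 0 < #|[set v | p v == k]| <= k.-1.

Local Notation color := (color L c).
Local Notation colors := (colors L c).
Local Notation color_class := (color_class c).
Local Notation out_colors := (out_colors c).
Local Notation multi_colors := (multi_colors c).

Let B := [set v | 0 < p v < k].
Let C := [set v | p v == k].
Let SB := color @: B.
Let SC := color @: C.
Let MB := multi_colors 2 SB.
Let MC := multi_colors 2 SC.
Let C3 := multi_colors 3 SC.

Lemma part_cases v : [\/ v = a, v \in B | v \in C].
Proof.
case: (posnP (p v)) => [/eqP | p_gt0]; first by rewrite part0 => /eqP ->; apply: Or31.
have [lt_pk | eq_pk] : p v < k \/ p v = k by have := part_le v; lia.
- by apply: Or32; rewrite inE p_gt0.
- by apply: Or33; rewrite inE eq_pk.
Qed.

Lemma color_class_sub_part v : color_class (color v) \subset [set u | p u == p v].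
Proof. by apply/subsetP => u; rewrite !inE => /eqP/(color_part c_col)->. Qed.

Lemma color_closed_parts (P : pred nat) :
  {in [set v | P (p v)], forall v w, color w = color v -> w \in [set v | P (p v)]}.
Proof. by move=> v; rewrite inE => Pv w /(color_part c_col); rewrite inE => ->. Qed.

Lemma k_gt1 : 1 < k.
Proof. by case/andP: card_part_last => /leq_trans/[apply]; case: k. Qed.

Lemma card_SB_MB : #|SB| + #|MB| <= (k - 1) * 2.
Proof.
have := card_multi_colors (color_closed_parts (P := fun j => 0 < j < k)).
move/(leq_trans (leq_addr _ _))/leq_trans; apply.
have := @card_part_range _ p 1 (k - 1) 2; rewrite subnKC ?(ltnW k_gt1) //; apply.
move=> j range_j; apply: card_part_mid; lia.
Qed.

Lemma card_SC_MC_C3 : #|SC| + #|MC| + #|C3| <= k.-1.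
Proof.
have := card_multi_colors (color_closed_parts (P := pred1 k)).
by move/leq_trans; apply; case/andP: card_part_last.
Qed.

Lemma card_colors : #|colors| <= (#|SB| + #|SC|).+1.
Proof.
have sub : colors \subset color a |: (SB :|: SC).
  apply/subsetP => _ /imsetP[v _ ->]; rewrite !inE.
  case: (part_cases v) => [-> | Bv | Cv]; first by rewrite eqxx.
    by rewrite (imset_f color Bv) orbT.
  by rewrite (imset_f color Cv) !orbT.
apply: leq_trans (subset_leq_card sub) _; rewrite cardsU1 -add1n.
by apply: leq_add; [apply: leq_b1 | apply: (leq_card_setU _ _).1].
Qed.

Lemma color_class_a : color_class (color a) = [set a].
Proof.
apply/setP => w; rewrite !inE; apply/eqP/eqP => [/(color_part c_col) pwa | -> //].
by apply/eqP; rewrite -part0 pwa part0.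
Qed.

Lemma colors_cases x : x \in colors -> [\/ x = color a, x \in SB | x \in SC].
Proof.
case/imsetP=> v _ ->; case: (part_cases v) => [-> | Bv | Cv]; first exact: Or31.
  by apply: Or32; apply: imset_f.
by apply: Or33; apply: imset_f.
Qed.

Lemma card_out_class1 (x : 'I_(color_bound L)) :
  #|color_class x| = 1 -> k <= #|out_colors x|.
Proof. by move/eqP/cards1P=> [v /(card_out_colors_class1 L_size c_col)]. Qed.

Lemma card_out_pair_B x :
  x \in SB -> 1 < #|color_class x| -> k.*2 <= #|out_colors x| + #|colors|.-1.
Proof.
case/imsetP=> v Bv -> class_gt1.
have : #|color_class (color v)| <= 2.
  apply: leq_trans (subset_leq_card (color_class_sub_part v)) _.
  by apply: card_part_mid; rewrite inE in Bv.
move=> class_le2; have /cards2P[u [w [_ class_v]]] : #|color_class (color v)| == 2.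
  by rewrite eqn_leq class_le2.
have sub z : z \in [set u; w] -> list_set L z :\ color v \subset colors :\ color v.
  by rewrite -class_v inE => /eqP <-; apply: list_setD1_sub_colors c_col c_unique z.
have := card_out_colors_class2 L_size c_col class_v (sub u (set21 _ _)) (sub w (set22 _ _)).
by rewrite [#|colors|](cardsD1 (color v)) imset_f.
Qed.

Lemma card_out_pair_C x :
  x \in SC -> #|color_class x| = 2 -> k.*2 <= #|out_colors x| + #|SB|.+1.
Proof.
case/imsetP=> v Cv -> /eqP/cards2P[u [w [_ class_v]]].
have sub z : z \in [set u; w] -> list_set L z :\ color v \subset color a |: SB.
  rewrite -class_v inE => /eqP zv; apply/subsetP => y.
  rewrite -zv => /(subsetP (list_set_sub_colors c_col c_unique z))/imsetP[w' + ->].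
  rewrite inE (color_part c_col zv); rewrite inE in Cv; rewrite (eqP Cv) !inE.
  case: (part_cases w') => [-> | Bw' | Cw']; first by rewrite eqxx.
    by rewrite (imset_f color Bw') orbT.
  by rewrite inE in Cw'; rewrite Cw'.
have := card_out_colors_class2 L_size c_col class_v (sub u (set21 _ _)) (sub w (set22 _ _)).
by move/leq_trans; apply; rewrite leq_add2l cardsU1 -add1n leq_add2r leq_b1.
Qed.

(* Otherwise card_out_low_colors would bound the out-colours of color a, of which
   there are k since a is alone in its part. *)
Lemma low_colors_large t : t < k -> t < #|low_colors L c t|.
Proof.
move=> lt_tk; have a_col : color a \in colors by apply/imsetP; exists a.
rewrite ltnNge; apply/negP => /(card_out_low_colors c_col c_unique)/(_ a_col).
apply/negP; rewrite -ltnNge.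
by apply: leq_trans lt_tk (card_out_class1 _); rewrite color_class_a cards1.
Qed.

Lemma low_colors_cases t x : t < k -> x \in low_colors L c t ->
  1 < #|color_class x| /\ (x \in SB \/ x \in SC).
Proof.
move=> lt_tk; rewrite inE => /andP[x_col out_x].
have class_gt1 : 1 < #|color_class x|.
  have := color_class_gt0 x_col; rewrite leq_eqVlt => /predU1P[class1 | //].
  by have := leq_trans (card_out_class1 (esym class1)) out_x; rewrite leqNgt lt_tk.
split=> //; case: (colors_cases x_col) => [xa | | ]; [| by left | by right].
by rewrite xa color_class_a cards1 in class_gt1.
Qed.

Lemma card_MB_MC : k <= #|MB| + #|MC|.
Proof.
have lt_k1 : k.-1 < k by have := k_gt1; lia.
have sub : low_colors L c k.-1 \subset MB :|: MC.
  apply/subsetP => x /(low_colors_cases lt_k1)[class_gt1 [SBx | SCx]].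
    by rewrite !inE SBx class_gt1.
  by rewrite !inE SCx class_gt1 orbT.
have := low_colors_large lt_k1; rewrite prednK ?(ltnW k_gt1) //.
by move/leq_trans/(_ (subset_leq_card sub))/leq_trans; apply; apply: (leq_card_setU _ _).1.
Qed.

Lemma card_MB_C3 : #|MB|.+2 <= #|C3| + #|SC|.
Proof.
rewrite leqNgt; apply/negP => few_C3.
have SC_gt0 : 0 < #|SC|.
  case/andP: card_part_last => /card_gt0P[v Cv] _.
  by apply/card_gt0P; exists (color v); apply: imset_f.
have MB_SB : #|MB| <= #|SB| by apply/subset_leq_card/subsetP => x; rewrite inE => /andP[].
(* for this t, all colours with at most t out-colours lie in C3 *)
have := card_SB_MB; set t := #|MB|.+1 - #|SC| => SB_MB.
have lt_tk : t < k by rewrite /t; lia.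
have card_low : #|low_colors L c t| <= #|C3|.
  apply/subset_leq_card/subsetP => x x_low.
  have [class_gt1 [SBx | SCx]] := low_colors_cases lt_tk x_low.
    have := card_out_pair_B SBx class_gt1; have := card_colors.
    by move: x_low; rewrite inE => /andP[_]; rewrite /t; lia.
  rewrite inE SCx /= ltn_neqAle class_gt1 andbT; apply/eqP => class2.
  have := card_out_pair_C SCx (esym class2).
  by move: x_low; rewrite inE => /andP[_]; rewrite /t; lia.
by have := leq_trans (low_colors_large lt_tk) card_low; rewrite /t; lia.
Qed.

Lemma small_multipartite_no_unique_coloring : False.
Proof. by have := card_SC_MC_C3; have := card_MB_MC; have := card_MB_C3; lia. Qed.

End SmallMultipartite.

Lemma size_K_sizes k : 0 < k -> size (K_sizes k) = k.+1.
Proof. by move=> k_gt0; rewrite /= size_cat size_nseq /=; lia. Qed.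

Lemma sumn_K_sizes k : 0 < k -> sumn (K_sizes k) = 3 * k - 2.
Proof. by move=> k_gt0; rewrite /= sumn_cat sumn_nseq /=; lia. Qed.

Lemma part_bounds_K_sizes k : 0 < k ->
  part_bounds (K_sizes k) = [seq j.*2.+1 | j <- iota 0 k] ++ [:: 3 * k - 2].
Proof.
move=> k_gt0; rewrite /part_bounds size_K_sizes // -addn1 iotaD map_cat add0n /=.
congr (_ ++ [:: _]).
  apply/eq_in_map => j; rewrite mem_iota add0n => /andP[_ lt_jk] /=.
  (* retype j from the eqType carrier to nat, which lia recognises *)
  move: j lt_jk => /= j lt_jk.
  rewrite take_cat size_nseq; case: ltnP => [lt_j|le_kj].
    by rewrite take_nseq ?sumn_nseq; lia.
  have -> : j = k - 1 by lia.
  by rewrite subnn take0 cats0 sumn_nseq; lia.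
by rewrite take_oversize ?size_cat ?size_nseq /=; rewrite ?sumn_cat ?sumn_nseq /=; lia.
Qed.

(* Vertex 0 is the singleton part, vertices 2j-1 and 2j form part j < k, and
   vertices 2k-1 .. 3k-3 form part k. *)
Lemma part_of_K_sizes k v : 0 < k -> v < 3 * k - 2 ->
  part_of (K_sizes k) v = minn k (v.+1 %/ 2).
Proof.
move=> k_gt0 lt_v; rewrite /part_of part_bounds_K_sizes // count_cat count_map /=.
rewrite leqNgt lt_v /= !addn0; elim: k {k_gt0 lt_v} => [|k IHk]; first by rewrite min0n.
by rewrite -addn1 iotaD count_cat IHk /= add0n addn0 -muln2; case: ltnP; lia.
Qed.

(* Vertex 0 and the first vertex 2j-1 of each pair get [0, k); the second vertex
   2j of a pair gets j and the colours [k, 2k-1) of part k; the vertex 2k-1+i of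
   part k gets k+i and [1, k). *)
Definition K_list k v :=
  if 2 * k - 1 <= v then v - k + 1 :: iota 1 k.-1
  else if odd v || (v == 0) then iota 0 k
  else v./2 :: iota k k.-1.

Definition K_color k v := if 2 * k - 1 <= v then v - k + 1 else v.+1 %/ 2.

Section KListForcing.

Variables (k : nat) (col : nat -> nat).
Hypothesis k_gt1 : 1 < k.
Hypothesis col_in : forall v, v < 3 * k - 2 -> col v \in K_list k v.
Hypothesis col_proper : forall u v, u < 3 * k - 2 -> v < 3 * k - 2 ->
  minn k (u.+1 %/ 2) != minn k (v.+1 %/ 2) -> col u != col v.

Lemma col_forced v y0 : v < 3 * k - 2 ->
  (forall y : nat, y \in K_list k v -> y != y0 -> exists2 u, u < 3 * k - 2 &
     (minn k (u.+1 %/ 2) != minn k (v.+1 %/ 2)) && (col u == y)) ->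
  col v = y0.
Proof.
move=> lt_v forced; apply/eqP; apply: contraT => col_v.
have [u lt_u /andP[uv /eqP col_u]] := forced _ (col_in lt_v) col_v.
by move: (col_proper lt_u lt_v uv); rewrite col_u eqxx.
Qed.

(* Vertex j.*2.-1 is vertex 0 for j = 0 and the first vertex of pair part j
   otherwise; these k pairwise adjacent vertices all have list [0, k). *)
Lemma col_first_onto y : y < k -> exists2 j, j < k & col j.*2.-1 = y.
Proof.
move=> lt_yk; pose s := [seq col j.*2.-1 | j <- iota 0 k].
have s_uniq : uniq s.
  rewrite map_inj_in_uniq ?iota_uniq // => i j; rewrite !mem_iota !add0n => lt_i lt_j /eqP.
  apply: contraTeq => ij; apply: col_proper; lia.
have s_sub : {subset s <= iota 0 k}.
  move=> x /mapP[j]; rewrite mem_iota add0n => lt_j ->.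
  have lt_v : j.*2.-1 < 3 * k - 2 by lia.
  move: (col_in lt_v); rewrite /K_list leqNgt (_ : j.*2.-1 < 2 * k - 1) /=; last lia.
  by case: j {lt_j lt_v} => // j; rewrite doubleS /= odd_double.
have size_s : size (iota 0 k) <= size s by rewrite size_map.
have [_ eq_s] := uniq_min_size s_uniq s_sub size_s.
have : y \in s by rewrite eq_s mem_iota.
by case/mapP=> j; rewrite mem_iota add0n => lt_j ->; exists j.
Qed.

Lemma col_last v : 2 * k - 1 <= v < 3 * k - 2 -> col v = v - k + 1.
Proof.
move=> /andP[le_v lt_v]; apply: col_forced => // y.
rewrite /K_list le_v inE mem_iota => /predU1P[-> /eqP //| range_y _].
have lt_yk : y < k by lia.
have [j lt_jk col_j] := col_first_onto lt_yk.
by exists j.*2.-1; [lia | rewrite col_j eqxx andbT; lia].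
Qed.

Lemma col_second j : 0 < j < k -> col j.*2 = j.
Proof.
move=> /andP[j_gt0 lt_jk]; apply: col_forced => [|y]; first lia.
rewrite /K_list leqNgt (_ : j.*2 < 2 * k - 1) /=; last lia.
rewrite odd_double double_eq0 (gtn_eqF j_gt0) /= doubleK inE mem_iota.
case/predU1P=> [-> /eqP //|range_y _].
have col_u : col (y + k - 1) = y by rewrite col_last; lia.
by exists (y + k - 1); [lia | rewrite col_u eqxx andbT; lia].
Qed.

Lemma col_zero : col 0 = 0.
Proof.
apply: col_forced => [|y]; first lia.
rewrite /K_list leqNgt (_ : 0 < 2 * k - 1) /=; last lia.
rewrite mem_iota => lt_y y_neq0; have col_y : col y.*2 = y by rewrite col_second; lia.
by exists y.*2; [lia | rewrite col_y eqxx andbT; lia].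
Qed.

Lemma col_first j : 0 < j < k -> col j.*2.-1 = j.
Proof.
move=> /andP[j_gt0 lt_jk]; apply: col_forced => [|y]; first lia.
have odd_v : odd j.*2.-1 by case: j j_gt0 {lt_jk} => // j; rewrite doubleS /= odd_double.
rewrite /K_list leqNgt (_ : j.*2.-1 < 2 * k - 1) /=; last lia.
rewrite odd_v mem_iota => lt_y y_neq_j; have [-> | y_gt0] := posnP y.
  by exists 0; [lia | rewrite col_zero eqxx andbT; lia].
have col_y : col y.*2 = y by rewrite col_second; lia.
by exists y.*2; [lia | rewrite col_y eqxx andbT; lia].
Qed.

Lemma col_K_color v : v < 3 * k - 2 -> col v = K_color k v.
Proof.
move=> lt_v; rewrite /K_color; case: leqP => [le_v | lt_v']; first by rewrite col_last ?le_v.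
have [-> | v_gt0] := posnP v; first by rewrite col_zero.
have := odd_double_half v; case: (odd v) => /= def_v.
  by rewrite -[v.+1 %/ 2]col_first; first congr col; lia.
by rewrite -[v.+1 %/ 2]col_second; first congr col; lia.
Qed.

End KListForcing.

Lemma K_list_uniq_size k v : 0 < k -> uniq (K_list k v) /\ size (K_list k v) = k.
Proof.
move=> k_gt0; rewrite /K_list; case: leqP => [le_v | lt_v]; last case: ifP => _.
- rewrite /= iota_uniq size_iota mem_iota andbT.
  by split; [apply/negP => /andP[] | ]; lia.
- by rewrite iota_uniq size_iota.
- rewrite /= iota_uniq size_iota mem_iota andbT -divn2.
  by split; [apply/negP => /andP[] | ]; lia.
Qed.

Lemma K_sizes_UkLC k : 1 < k -> UkLC (cm_adj (K_sizes k)) k.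
Proof.
move=> k_gt1; have n_def := sumn_K_sizes (ltnW k_gt1).
have part_K (v : 'I_(sumn (K_sizes k))) : part_of (K_sizes k) v = minn k (v.+1 %/ 2).
  by rewrite part_of_K_sizes -?n_def //; lia.
exists (fun v : 'I__ => K_list k v); split.
  by move=> v; apply: K_list_uniq_size; lia.
exists (fun v : 'I__ => K_color k v); split.
  split=> [v | u v]; last first.
    rewrite /cm_adj !part_K /K_color => /eqP neq_parts; apply/eqP.
    by case: ifP => ?; case: ifP => ?; lia.
  rewrite /K_list /K_color; case: leqP => [_ | lt_v]; first exact: mem_head.
  case: ifP => [_ | /norP[even_v _]]; first by rewrite mem_iota; lia.
  by rewrite inE; have := odd_double_half v; rewrite (negbTE even_v) -divn2; lia.
move=> c' [c'L c'_proper] v; have lt_v : v < 3 * k - 2 by rewrite -n_def.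
pose vtx i := insubd v i.
have vtxK i : i < 3 * k - 2 -> val (vtx i) = i by rewrite -n_def val_insubd => ->.
have -> : v = vtx v by apply: val_inj; rewrite vtxK.
rewrite vtxK //; apply: (@col_K_color k (c' \o vtx)) => // [i lt_i | i j lt_i lt_j].
  by rewrite /= -{2}(vtxK i lt_i).
by move=> neq_parts; apply: c'_proper; rewrite /cm_adj !part_K !vtxK.
Qed.

Lemma K_sizes_not_UkLC k : 1 < k -> property_M (cm_adj (K_sizes k)) k.+1.
Proof.
move=> k_gt1 [L [L_size [c [c_col c_unique]]]].
have n_def := sumn_K_sizes (ltnW k_gt1).
pose p (v : 'I_(sumn (K_sizes k))) := part_of (K_sizes k) v.
have p_def v : p v = minn k (v.+1 %/ 2).
  by rewrite /p part_of_K_sizes -?n_def //; lia.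
have n_gt0 : 0 < sumn (K_sizes k) by rewrite n_def; lia.
have lt_last : 2 * k - 1 < sumn (K_sizes k) by rewrite n_def; lia.
apply: (@small_multipartite_no_unique_coloring k _ p (Ordinal n_gt0) L c) => //.
- by move=> v; rewrite p_def -val_eqE /=; apply/eqP/eqP; lia.
- by move=> v; rewrite p_def geq_minl.
- move=> j range_j.
  apply: leq_trans (card_ord_range (lo := j.*2.-1) (hi := j.*2.+1) _) _; last lia.
  by move=> v; rewrite inE p_def => /eqP; lia.
- apply/andP; split.
    by apply/card_gt0P; exists (Ordinal lt_last); rewrite inE p_def /=; apply/eqP; lia.
  apply: leq_trans (card_ord_range (lo := 2 * k - 1) (hi := 3 * k - 2) _) _; last lia.
  move=> v; rewrite inE p_def => /eqP.
  by have := ltn_ord v; rewrite {2}n_def; lia.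
Qed.

Theorem mainTheorem16 (k : nat) (hk : 2 <= k) :
  m_number_is (cm_adj (K_sizes k)) (k + 1).
Proof.
rewrite addn1; apply: m_number_isS; first exact: ltnW hk.
  exact: K_sizes_UkLC.
exact: K_sizes_not_UkLC.
Qed.
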